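(* Let $V$ be a finite nonempty set and $U\subseteq V$. For every $x\in X_V$, the vector $x'\in\{0,1\}^{P_V}$ defined by $x'_{pq}=0$ if $pq\in U\times(V\setminus U)$ and $x'_{pq}=x_{pq}$ otherwise, satisfies $x'\in X_V$.
   Context: $P_V=\{pq\in V^2\mid p\neq q\}$. $X_V$ is the set of all $x\in\{0,1\}^{P_V}$ such that $x_{pq}+x_{qr}-x_{pr}\le 1$ for all pairwise distinct $p,q,r\in V$. *)

From mathcomp Require Import all_boot.
Set Implicit Arguments. Unset Strict Implicit. Unset Printing Implicit Defensive.

Definition PV (V : finType) := {pq : V * V | pq.1 != pq.2}.

(* {0,1}^{P_V} : 0/1 vectors indexed by P_V, encoded as nat-valued functions
   with values in {0,1} *)
Definition binvec (V : finType) (x : PV V -> nat) : Prop :=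
  forall pq, x pq <= 1.

Definition coord (V : finType) (x : PV V -> nat) (p q : V) (h : p != q) : nat :=
  x (exist _ (p, q) h).

Definition XV (V : finType) (x : PV V -> nat) : Prop :=
  binvec x /\
  forall (p q r : V) (hpq : p != q) (hqr : q != r) (hpr : p != r),
    (coord x hpq + coord x hqr <= 1 + coord x hpr)%N.

Definition cut_zero (V : finType) (U : {set V}) (x : PV V -> nat) : PV V -> nat :=
  fun pq => if ((val pq).1 \in U) && ((val pq).2 \notin U) then 0 else x pq.

(* If pr crosses from U to V \ U, then so does pq or qr (according to whether
   q lies in U), so the left-hand side of the triangle inequality at (p,q,r)
   is at most 1. Otherwise x'_pr = x_pr, and x' <= x pointwise. *)
From mathcomp Require Import all_boot.

Section CutZero.

Variables (V : finType) (U : {set V}) (x : PV V -> nat).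

Lemma cut_zero_le pq : cut_zero U x pq <= x pq.
Proof. by rewrite /cut_zero; case: ifP. Qed.

Lemma cut_zero_binvec : binvec x -> binvec (cut_zero U x).
Proof. by move=> x01 pq; apply: leq_trans (cut_zero_le pq) (x01 pq). Qed.

Lemma coord_cut_zero (p q : V) (hpq : p != q) :
  coord (cut_zero U x) hpq = if (p \in U) && (q \notin U) then 0 else coord x hpq.
Proof. by []. Qed.

Lemma cut_zero_triangle (p q r : V) (hpq : p != q) (hqr : q != r) (hpr : p != r) :
  binvec x -> coord x hpq + coord x hqr <= 1 + coord x hpr ->
  coord (cut_zero U x) hpq + coord (cut_zero U x) hqr
    <= 1 + coord (cut_zero U x) hpr.
Proof.
move=> x01 triangle; rewrite !coord_cut_zero.
have [/andP[pU rU] | _] := boolP ((p \in U) && (r \notin U)).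
  rewrite pU rU /=.
  by case: (q \in U); rewrite ?addn0 ?add0n; apply: x01.
apply: leq_trans triangle.
by apply: leq_add; case: ifP.
Qed.

End CutZero.

Theorem lemma5p2 (V : finType) (HV : 0 < #|V|) (U : {set V})
  (x : PV V -> nat) :
  XV x -> XV (cut_zero U x).
Proof.
move=> [x01 triangle]; split; first exact: cut_zero_binvec.
by move=> p q r hpq hqr hpr; apply: cut_zero_triangle.
Qed.
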